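(* Let $n,k$ be integers with $2\le k\le n$, and let $M\in\mathcal{S}^{n,k}$ have smallest eigenvalue $-\lambda_1<0$. Then $$\mathrm{dist}_F(M,\mathcal{S}^n_+)\le\sqrt{n-k}\cdot\lambda_1.$$
   Context: $\mathcal{S}^n_+$ denotes the cone of $n\times n$ real symmetric positive semidefinite (PSD) matrices. For integers $2\le k\le n$, the $k$-PSD closure $\mathcal{S}^{n,k}$ is the set of all $n\times n$ real symmetric matrices all of whose $k\times k$ principal submatrices are PSD. $\mathrm{dist}_F(M,\mathcal{S}^n_+)=\inf_{N\in\mathcal{S}^n_+}\|M-N\|_F$ with $\|\cdot\|_F$ the Frobenius norm. *)

From HB Require Import structures.
From mathcomp Require Import all_boot all_order all_algebra.
From mathcomp Require Import all_classical all_reals.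
Set Implicit Arguments. Unset Strict Implicit. Unset Printing Implicit Defensive.
Import Order.TTheory GRing.Theory Num.Theory.
Local Open Scope ring_scope.
Local Open Scope classical_set_scope.

Definition symmetric_mx (R : realType) (n : nat) (A : 'M[R]_n) : Prop :=
  A^T = A.

Definition psd_mx (R : realType) (n : nat) (A : 'M[R]_n) : Prop :=
  symmetric_mx A /\ forall v : 'cV[R]_n, 0 <= (v^T *m A *m v) 0 0.

Definition principal_submx (R : realType) (n k : nat) (f : 'I_k -> 'I_n)
  (A : 'M[R]_n) : 'M[R]_k := mxsub f f A.

Definition kpsd_closure (R : realType) (n k : nat) (A : 'M[R]_n) : Prop :=
  symmetric_mx A /\
  forall f : 'I_k -> 'I_n, injective f -> psd_mx (principal_submx f A).

Definition frob_norm (R : realType) (n : nat) (A : 'M[R]_n) : R :=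
  Num.sqrt (\sum_(i < n) \sum_(j < n) (A i j) ^+ 2).

Definition dist_psd (R : realType) (n : nat) (M : 'M[R]_n) : R :=
  inf [set frob_norm (M - N) | N in [set N : 'M[R]_n | psd_mx N]].

From HB Require Import structures.
From mathcomp Require Import all_boot all_order all_algebra.
From mathcomp Require Import all_classical all_reals.
From mathcomp Require Import ring zify complex.
Import Order.TTheory GRing.Theory Num.Theory.
Set Implicit Arguments. Unset Strict Implicit. Unset Printing Implicit Defensive.
Local Open Scope ring_scope.
Local Open Scope sesquilinear_scope.

(* Diagonalise M = P^* D P with P unitary (over R[i], where the spectral
   theorem is available) and let N = P^* D_+ P, where D_+ replaces the negative
   eigenvalues by 0. Then ||M - N||_F^2 is the sum of the squares of the
   negative eigenvalues, each of which is at most lambda1^2. There are at most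
   n - k of them: their eigenvectors span a space on which v M v^* is negative
   definite, while by the k-PSD hypothesis the form is nonnegative on the
   k-dimensional space of vectors supported on k given coordinates, so the two
   spaces meet trivially. Finally, the real part of N is a real PSD matrix that
   is at least as close to M as N is. *)

Local Notation cplx := (real_complex _).
Local Notation cplxmx := (map_mx cplx).

Lemma mulmx_trmx_sym (F : comPzRingType) k (K : 'M[F]_k) (x y : 'rV[F]_k) :
  K^T = K -> x *m K *m y^T = y *m K *m x^T.
Proof.
move=> K_sym.
have -> : x *m K *m y^T = (y *m K *m x^T)^T by rewrite !trmx_mul trmxK K_sym mulmxA.
by apply/matrixP => i j; rewrite !ord1 mxE.
Qed.

Section ClosedFieldMatrix.
Variable C : numClosedFieldType.

Lemma mxsub1_inj n k (f : 'I_k -> 'I_n) :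
  injective f -> mxsub f f (1%:M : 'M[C]_n) = 1%:M.
Proof. by move=> f_inj; apply/matrixP => i j; rewrite !mxE (inj_eq f_inj). Qed.

Lemma rowsub_unitarymx m n k (f : 'I_k -> 'I_m) (P : 'M[C]_(m, n)) :
  injective f -> P \is unitarymx -> rowsub f P \is unitarymx.
Proof.
move=> f_inj /unitarymxP P_unitary; apply/unitarymxP.
by rewrite trmx_mxsub map_mxsub -mxsub_mul P_unitary mxsub1_inj.
Qed.

Lemma trmxC_mul m n p (A : 'M[C]_(m, n)) (B : 'M[C]_(n, p)) :
  (A *m B)^t* = B^t* *m A^t*.
Proof. by rewrite trmx_mul map_mxM. Qed.

Lemma hform_conj_diag n (P : 'M[C]_n) (e v : 'rV[C]_n) :
  (v *m (P^t* *m diag_mx e *m P) *m v^t*) 0 0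
    = \sum_j e 0 j * `|(v *m P^t*) 0 j| ^+ 2.
Proof.
have -> : v *m (P^t* *m diag_mx e *m P) *m v^t*
    = v *m P^t* *m diag_mx e *m (v *m P^t*)^t*.
  by rewrite trmxC_mul trmxCK !mulmxA.
rewrite mul_mx_diag !mxE; apply: eq_bigr => j _.
by rewrite !mxE normCK mulrAC mulrC.
Qed.

Lemma frobenius_tr m n (X : 'M[C]_(m, n)) :
  \sum_i \sum_j `|X i j| ^+ 2 = \tr (X *m X^t*).
Proof.
apply: eq_bigr => i _; rewrite !mxE; apply: eq_bigr => j _.
by rewrite !mxE normCK.
Qed.

Lemma frobenius_conj_diag n (P : 'M[C]_n) (e : 'rV[C]_n) :
  P \is unitarymx ->
  \sum_i \sum_j `|(P^t* *m diag_mx e *m P) i j| ^+ 2 = \sum_j `|e 0 j| ^+ 2.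
Proof.
move=> /unitarymxP P_unitary; rewrite frobenius_tr !trmxC_mul trmxCK.
rewrite -!mulmxA mxtrace_mulC -!mulmxA P_unitary mulmx1 [P *m _]mulmxA P_unitary.
rewrite mul1mx tr_diag_mx map_diag_mx mulmx_diag mxtrace_diag.
by apply: eq_bigr => j _; rewrite !mxE normCK.
Qed.

Lemma mxsub_rowsub1 n k (f : 'I_k -> 'I_n) (X : 'M[C]_n) :
  mxsub f f X = rowsub f 1%:M *m X *m (rowsub f 1%:M)^t*.
Proof.
rewrite mul_rowsub_mx mul1mx trmx_mxsub map_mxsub trmx1 map_mx1 mulmx_colsub mulmx1.
by apply/matrixP => i j; rewrite !mxE.
Qed.

Lemma capmx_neq0 m1 m2 n (U : 'M[C]_(m1, n)) (E : 'M[C]_(m2, n)) :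
  (n < \rank U + \rank E)%N -> (U :&: E)%MS != 0.
Proof.
move=> rank_gt; rewrite -mxrank_eq0; apply/eqP => cap0.
have := mxrank_sum_cap U E; have := rank_leq_col (U + E)%MS.
by rewrite cap0; lia.
Qed.

End ClosedFieldMatrix.

Section HermitianSpectral.
Variables (C : numClosedFieldType) (n : nat) (A : 'M[C]_n).
Hypothesis A_herm : A \is hermsymmx.
Local Notation P := (spectralmx A).
Local Notation d := (spectral_diag A).

Lemma spectral_hermE : A = P^t* *m diag_mx d *m P.
Proof.
rewrite -invmx_unitary ?spectral_unitarymx //.
exact/orthomx_spectralP/hermitian_normalmx.
Qed.

Lemma spectral_diag_real j : d 0 j \is Num.real.
Proof. exact/mxOverP/hermitian_spectral_diag_real. Qed.

Lemma eigenvalue_spectral_diag j : eigenvalue A (d 0 j).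
Proof.
move: (spectral_unitarymx A) spectral_hermE.
set Q := spectralmx A => /unitarymxP Q_unitary A_E.
have QA : Q *m A = diag_mx d *m Q.
  by rewrite {1}A_E !mulmxA Q_unitary mul1mx.
apply/eigenvalueP; exists (row j Q).
  by rewrite -row_mul QA mul_diag_mx; apply/rowP => l; rewrite !mxE.
apply/eqP => /(congr1 (mulmx^~ (Q^t*))); rewrite -row_mul Q_unitary mul0mx.
by move/rowP/(_ j); rewrite !mxE eqxx => /eqP; rewrite oner_eq0.
Qed.

Lemma hform_spectral (v : 'rV[C]_n) :
  (v *m A *m v^t*) 0 0 = \sum_j d 0 j * `|(v *m P^t*) 0 j| ^+ 2.
Proof. by rewrite {1}spectral_hermE hform_conj_diag. Qed.

Lemma hform_span_neg_lt0 m (h : 'I_m -> 'I_n) (v : 'rV[C]_n) :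
  (forall i, d 0 (h i) < 0) -> (v <= rowsub h P)%MS -> v != 0 ->
  (v *m A *m v^t*) 0 0 < 0.
Proof.
have /unitarymxP P_unitary := spectral_unitarymx A.
move=> h_neg /submxP [w ->] v_neq0; rewrite hform_spectral.
set c := w *m rowsub h P *m P^t*.
have c_supp j : c 0 j != 0 -> d 0 j < 0.
  rewrite /c -mulmxA mul_rowsub_mx P_unitary mxE; apply: contraNT => d_ge0.
  rewrite big1 // => i _; rewrite !mxE; case: eqVneq => [hij|]; last by rewrite mulr0.
  by move: d_ge0; rewrite -hij h_neg.
have term_gt0 j : c 0 j != 0 -> 0 < - (d 0 j * `|c 0 j| ^+ 2).
  move=> cj_neq0; rewrite -mulNr mulr_gt0 ?oppr_gt0 ?c_supp //.
  by rewrite exprn_gt0 ?normr_gt0.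
have term_ge0 j : 0 <= - (d 0 j * `|c 0 j| ^+ 2).
  have [->|/term_gt0/ltW //] := eqVneq (c 0 j) 0.
  by rewrite normr0 expr2 !mulr0 oppr0.
have [j0 cj0_neq0] : exists j, c 0 j != 0.
  apply/existsP; apply: contraNT v_neq0 => /existsPn c0.
  have c_eq0 : c = 0 by apply/rowP => j; rewrite [RHS]mxE; apply/eqP/negbNE.
  by apply/eqP; rewrite -[LHS]mulmx1 -(mulmx1C P_unitary) mulmxA -/c c_eq0 mul0mx.
rewrite -oppr_gt0 -sumrN (bigD1 j0) //=.
by apply: (lt_le_trans (term_gt0 _ cj0_neq0)); rewrite lerDl sumr_ge0.
Qed.

Lemma card_spectral_neg_le m (E : 'M[C]_(m, n)) :
  (forall v : 'rV[C]_n, (v <= E)%MS -> 0 <= (v *m A *m v^t*) 0 0) ->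
  (#|[set j | (d 0 j < 0)%R]| <= n - \rank E)%N.
Proof.
move=> E_ge0; rewrite leqNgt; apply/negP => card_gt.
set h := (enum_val : 'I_#|[set j | d 0 j < 0]| -> 'I_n).
have h_neg i : d 0 (h i) < 0 by have := enum_valP i; rewrite inE.
have rank_span : \rank (rowsub h P) = #|[set j | d 0 j < 0]|.
  exact/mxrank_unitary/rowsub_unitarymx/spectral_unitarymx/enum_val_inj.
have [|v v_cap v_neq0] := rowV0Pn (capmx_neq0 (U := rowsub h P) (E := E) _).
  by rewrite rank_span; have := rank_leq_col E; lia.
have v_lt0 := hform_span_neg_lt0 h_neg (submx_trans v_cap (capmxSl _ _)) v_neq0.
have := E_ge0 v (submx_trans v_cap (capmxSr _ _)).
by move=> /le_lt_trans/(_ v_lt0); rewrite ltxx.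
Qed.

Definition psd_part : 'M[C]_n :=
  P^t* *m diag_mx (\row_j (if d 0 j < 0 then 0 else d 0 j)) *m P.

Lemma trmxC_psd_part : psd_part^t* = psd_part.
Proof.
rewrite !trmxC_mul trmxCK tr_diag_mx map_diag_mx mulmxA; congr (_ *m diag_mx _ *m _).
apply/rowP => j; rewrite !mxE.
by apply: conj_Creal; case: ifP => _; rewrite ?real0 ?spectral_diag_real.
Qed.

Lemma hform_psd_part_ge0 (v : 'rV[C]_n) : 0 <= (v *m psd_part *m v^t*) 0 0.
Proof.
rewrite hform_conj_diag sumr_ge0 // => j _; rewrite mxE.
case: ifPn => [_|d_ge0]; first by rewrite mul0r.
by rewrite mulr_ge0 ?exprn_ge0 // real_leNgt ?real0 ?spectral_diag_real.
Qed.

Lemma sub_psd_partE :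
  A - psd_part = P^t* *m diag_mx (\row_j (if d 0 j < 0 then d 0 j else 0)) *m P.
Proof.
rewrite /psd_part {1}spectral_hermE -mulmxBl -mulmxBr -linearB /=.
congr (_ *m diag_mx _ *m _); apply/rowP => j.
by rewrite !mxE; case: ifP; rewrite ?subr0 ?subrr.
Qed.

Lemma frobenius_sub_psd_part_le m (E : 'M[C]_(m, n)) (lam : C) :
  0 <= lam -> (forall j, - lam <= d 0 j) ->
  (forall v : 'rV[C]_n, (v <= E)%MS -> 0 <= (v *m A *m v^t*) 0 0) ->
  \sum_i \sum_j `|(A - psd_part) i j| ^+ 2 <= (n - \rank E)%:R * lam ^+ 2.
Proof.
move=> lam_ge0 lam_le E_ge0.
rewrite sub_psd_partE frobenius_conj_diag ?spectral_unitarymx //.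
rewrite (bigID (mem [set j | d 0 j < 0])) /= [X in _ + X]big1 ?addr0 => [|j]; last first.
  by rewrite inE mxE => /negPf ->; rewrite normr0 expr2 mulr0.
apply: (le_trans (y := \sum_(j in [set j | d 0 j < 0]) lam ^+ 2)).
  apply: ler_sum => j; rewrite inE mxE => neg_j; rewrite neg_j.
  by rewrite ler_sqr ?nnegrE ?normr_ge0 // ltr0_norm // lerNl.
rewrite sumr_const -[_ *+ _]mulr_natl ler_wpM2r ?exprn_ge0 // ler_nat.
exact: card_spectral_neg_le.
Qed.

End HermitianSpectral.

Section ComplexReal.
Variable R : rcfType.

Lemma Re_cplxM (x : R) (z : R[i]) : complex.Re (cplx x * z) = x * complex.Re z.
Proof. by case: z => a b /=; rewrite mul0r subr0. Qed.

Lemma trmxC_cplxmx m n (X : 'M[R]_(m, n)) : (cplxmx X)^t* = cplxmx X^T.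
Proof. by apply/matrixP => i j; rewrite !mxE conj_Creal // complex_real. Qed.

Lemma conjC_ReIm (z : R[i]) : z^* = (complex.Re z -i* complex.Im z)%C.
Proof. by case: z. Qed.

Lemma frobenius_Re_le n (M : 'M[R]_n) (N : 'M[R[i]]_n) :
  cplx (\sum_i \sum_j ((M - map_mx (@complex.Re R) N) i j) ^+ 2)
    <= \sum_i \sum_j `|(cplxmx M - N) i j| ^+ 2.
Proof.
rewrite rmorph_sum; apply: ler_sum => i _; rewrite rmorph_sum; apply: ler_sum => j _.
by rewrite !mxE -add_Re2_Im2 lecR raddfB /= lerDl sqr_ge0.
Qed.

End ComplexReal.

Section Complexification.
Variable R : realType.

Lemma hform_cplx_ge0 k (K : 'M[R]_k) (w : 'rV[R[i]]_k) :
  psd_mx K -> 0 <= (w *m cplxmx K *m w^t*) 0 0.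
Proof.
move=> [K_sym K_ge0].
set a := map_mx (@complex.Re R) w; set b := map_mx (@complex.Im R) w.
have w_E : w = cplxmx a + 'i%C *: cplxmx b.
  by apply/matrixP => i j; rewrite !mxE [LHS]complexE.
have wt_E : w^t* = cplxmx a^T - 'i%C *: cplxmx b^T.
  by apply/matrixP => i j; rewrite !mxE conjC_ReIm; simpc.
have cplx_hform (x y : 'rV[R]_k) :
    cplxmx x *m cplxmx K *m cplxmx y^T = cplxmx (x *m K *m y^T).
  by rewrite -!map_mxM.
(* The cross terms of (a + i b) K (a - i b)^T cancel since K is symmetric. *)
have -> : (w *m cplxmx K *m w^t*) 0 0 =
    cplx ((a *m K *m a^T) 0 0 + (b *m K *m b^T) 0 0).
  rewrite wt_E {1}w_E mulmxDl -scalemxAl !mulmxDl !mulmxBr -!scalemxAl -!scalemxAr.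
  rewrite !cplx_hform (mulmx_trmx_sym a b K_sym).
  by rewrite !mxE rmorphD mulrA -expr2 sqr_i; ring.
have form_ge0 (x : 'rV[R]_k) : 0 <= (x *m K *m x^T) 0 0.
  by have := K_ge0 x^T; rewrite trmxK.
by rewrite ler0c addr_ge0.
Qed.

Lemma cplx_hermsymmx n (M : 'M[R]_n) : symmetric_mx M -> cplxmx M \is hermsymmx.
Proof.
by move=> M_sym; apply/is_hermitianmxP; rewrite expr0 scale1r trmxC_cplxmx M_sym.
Qed.

Lemma spectral_diag_cplx_ge n (M : 'M[R]_n) (lam : R) :
  symmetric_mx M -> (forall a, eigenvalue M a -> lam <= a) ->
  forall j, cplx lam <= spectral_diag (cplxmx M) 0 j.
Proof.
move=> /cplx_hermsymmx M_herm lam_le j.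
have d_E := RRe_real (spectral_diag_real M_herm j).
rewrite -d_E lecR; apply: lam_le.
rewrite -(eigenvalue_map cplx); have := eigenvalue_spectral_diag M_herm j.
by rewrite -{1}d_E.
Qed.

Lemma kpsd_hform_ge0 n k (M : 'M[R]_n) (f : 'I_k -> 'I_n) (v : 'rV[R[i]]_n) :
  kpsd_closure k M -> injective f -> (v <= rowsub f 1%:M)%MS ->
  0 <= (v *m cplxmx M *m v^t*) 0 0.
Proof.
move=> [_ M_psd] f_inj /submxP [w ->].
have -> : w *m rowsub f 1%:M *m cplxmx M *m (w *m rowsub f 1%:M)^t*
    = w *m (rowsub f 1%:M *m cplxmx M *m (rowsub f 1%:M)^t*) *m w^t*.
  by rewrite trmxC_mul !mulmxA.
by rewrite -mxsub_rowsub1 -map_mxsub; exact: hform_cplx_ge0 (M_psd f f_inj).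
Qed.

Lemma psd_mx_Re n (N : 'M[R[i]]_n) :
  N^t* = N -> (forall v : 'rV[R[i]]_n, 0 <= (v *m N *m v^t*) 0 0) ->
  psd_mx (map_mx (@complex.Re R) N).
Proof.
move=> N_herm N_ge0; split.
  by apply/matrixP => i j; rewrite !mxE -[in RHS]N_herm !mxE conjC_ReIm.
move=> v; have := N_ge0 (cplxmx v^T); rewrite trmxC_cplxmx trmxK.
have -> : (v^T *m map_mx (@complex.Re R) N *m v) 0 0
    = complex.Re ((cplxmx v^T *m N *m cplxmx v) 0 0).
  rewrite !mxE raddf_sum /=; apply: eq_bigr => j _.
  rewrite !mxE [in RHS]mulrC Re_cplxM raddf_sum /= mulrC; congr (_ * _).
  by apply: eq_bigr => i _; rewrite !mxE Re_cplxM.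
by rewrite lecE => /andP [_].
Qed.

Lemma dist_psd_le n (M N : 'M[R]_n) : psd_mx N -> dist_psd M <= frob_norm (M - N).
Proof.
move=> N_psd; apply: ge_inf; last by exists N.
by exists 0 => _ [X _ <-]; exact: sqrtr_ge0.
Qed.

Lemma frob_norm_le n (X : 'M[R]_n) (m : nat) (lam : R) : 0 <= lam ->
  \sum_i \sum_j X i j ^+ 2 <= m%:R * lam ^+ 2 -> frob_norm X <= Num.sqrt m%:R * lam.
Proof.
move=> lam_ge0 X_le; rewrite /frob_norm -[lam in X in _ <= X](ger0_norm lam_ge0).
by rewrite -sqrtr_sqr -sqrtrM ?ler0n // ler_wsqrtr.
Qed.

End Complexification.

Theorem proposition3 (R : realType) (n k : nat) (M : 'M[R]_n) (lambda1 : R) :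
  (2 <= k)%N -> (k <= n)%N ->
  kpsd_closure k M ->
  0 < lambda1 ->
  eigenvalue M (- lambda1) ->
  (forall a : R, eigenvalue M a -> - lambda1 <= a) ->
  dist_psd M <= Num.sqrt ((n - k)%:R) * lambda1.
Proof.
move=> _ le_kn M_kpsd lam_gt0 _ lam_min.
have [M_sym _] := M_kpsd.
set A := cplxmx M.
have A_herm : A \is hermsymmx by exact: cplx_hermsymmx.
have widen_inj : injective (widen_ord le_kn) by move=> i j [] /val_inj.
set E := rowsub (widen_ord le_kn) (1%:M : 'M[R[i]]_n).
have rank_E : \rank E = k.
  apply/mxrank_unitary/rowsub_unitarymx => //.
  by apply/unitarymxP; rewrite trmx1 map_mx1 mulmx1.
have E_ge0 (v : 'rV[R[i]]_n) : (v <= E)%MS -> 0 <= (v *m A *m v^t*) 0 0.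
  exact: kpsd_hform_ge0.
have d_ge j : - cplx lambda1 <= spectral_diag A 0 j.
  by rewrite -rmorphN; exact: spectral_diag_cplx_ge.
have := frobenius_sub_psd_part_le A_herm _ d_ge E_ge0.
rewrite ler0c ltW // rank_E => /(_ isT) /(le_trans (frobenius_Re_le M _)).
rewrite -(rmorph_nat cplx) -rmorphXn -rmorphM lecR => frob_le.
have N_psd := psd_mx_Re (trmxC_psd_part A_herm) (hform_psd_part_ge0 A_herm).
exact: le_trans (dist_psd_le M N_psd) (frob_norm_le (ltW lam_gt0) frob_le).
Qed.
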